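(* Let $n\ge4$ be even and let $K$ be an algebraically closed field of characteristic different from $2$. Then $P(\mathbb D_n)\cong P^*(\mathbb D_n)$ over $K$.
   Context: Paths in a quiver are composed from left to right: for arrows $\alpha: i\to j$ and $\beta: j\to k$, $\alpha\beta$ is the path $i\to j\to k$. The quiver $Q_{\mathbb D_n}$ has vertices $0,\dots,n-1$ and arrows $a_0:0\to2$, $\bar a_0:2\to0$, $a_1:1\to2$, $\bar a_1:2\to1$, $a_i:i\to i+1$, $\bar a_i:i+1\to i$ ($2\le i\le n-2$); put $\bar{\bar a}=a$. The preprojective algebra is $P(\mathbb D_n)=KQ_{\mathbb D_n}/I$, where $I$ is generated by $\sum_{a\text{ starting at }v}a\bar a$ for all vertices $v$. With $n=2m$, $P^*(\mathbb D_n)=KQ_{\mathbb D_n}/I^*$, where $I^*$ is generated by $\sum_{a\text{ starting at }v}a\bar a$ for all vertices $v\neq2$, together with $\bar a_0a_0+\bar a_1a_1+a_2\bar a_2+(\bar a_0a_0\bar a_1a_1)^{m-1}$ and $(\bar a_0a_0+\bar a_1a_1)^{n-2}$. *)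

From HB Require Import structures.
From Stdlib Require Lists.List.
From mathcomp Require Import all_boot all_order all_algebra.
Set Implicit Arguments. Unset Strict Implicit. Unset Printing Implicit Defensive.
Import GRing.Theory.
Local Open Scope ring_scope.

(* Finitely presented unital associative K-algebras, encoded syntactically.  *)
(* A presentation is a type of generators G and a list of relators           *)
(* (terms that are set to 0).  The presented algebra is the type of terms    *)
(* modulo the congruence [eqv R] generated by the K-algebra axioms and the   *)
(* relators R.                                                               *)

Inductive term (K : Type) (G : Type) : Type :=
  | Gen of G
  | Zero
  | One
  | Add of term K G & term K G
  | Mul of term K G & term K G
  | Scale of K & term K G.

Arguments Zero {K G}.
Arguments One {K G}.
Arguments Gen {K G}.

Section Terms.
Variable K : fieldType.

Definition tsub (G : Type) (x y : term K G) : term K G := Add x (Scale (-1) y).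

Fixpoint tpow (G : Type) (x : term K G) (k : nat) : term K G :=
  match k with 0 => One | k'.+1 => Mul x (tpow x k') end.

Definition tsum (G : Type) (s : seq (term K G)) : term K G := foldr (@Add K G) Zero s.

Fixpoint subst (G G' : Type) (s : G -> term K G') (t : term K G) : term K G' :=
  match t with
  | Gen g => s g
  | Zero => Zero
  | One => One
  | Add x y => Add (subst s x) (subst s y)
  | Mul x y => Mul (subst s x) (subst s y)
  | Scale c x => Scale c (subst s x)
  end.

Inductive eqv (G : Type) (R : seq (term K G)) : term K G -> term K G -> Prop :=
  | eqv_refl x : eqv R x x
  | eqv_sym x y : eqv R x y -> eqv R y x
  | eqv_trans x y z : eqv R x y -> eqv R y z -> eqv R x z
  | eqv_add x x' y y' : eqv R x x' -> eqv R y y' -> eqv R (Add x y) (Add x' y')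
  | eqv_mul x x' y y' : eqv R x x' -> eqv R y y' -> eqv R (Mul x y) (Mul x' y')
  | eqv_scale c x x' : eqv R x x' -> eqv R (Scale c x) (Scale c x')
  | eqv_addA x y z : eqv R (Add x (Add y z)) (Add (Add x y) z)
  | eqv_addC x y : eqv R (Add x y) (Add y x)
  | eqv_add0 x : eqv R (Add Zero x) x
  | eqv_addN x : eqv R (Add x (Scale (-1) x)) Zero
  | eqv_mulA x y z : eqv R (Mul x (Mul y z)) (Mul (Mul x y) z)
  | eqv_mul1l x : eqv R (Mul One x) x
  | eqv_mul1r x : eqv R (Mul x One) x
  | eqv_mulDl x y z : eqv R (Mul (Add x y) z) (Add (Mul x z) (Mul y z))
  | eqv_mulDr x y z : eqv R (Mul x (Add y z)) (Add (Mul x y) (Mul x z))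
  | eqv_scaleA c d x : eqv R (Scale c (Scale d x)) (Scale (c * d) x)
  | eqv_scale1 x : eqv R (Scale 1 x) x
  | eqv_scaleDr c x y : eqv R (Scale c (Add x y)) (Add (Scale c x) (Scale c y))
  | eqv_scaleDl c d x : eqv R (Scale (c + d) x) (Add (Scale c x) (Scale d x))
  | eqv_scaleMl c x y : eqv R (Scale c (Mul x y)) (Mul (Scale c x) y)
  | eqv_scaleMr c x y : eqv R (Scale c (Mul x y)) (Mul x (Scale c y))
  | eqv_rel r : Stdlib.Lists.List.In r R -> eqv R r Zero.

(* K<G>/(R1) and K<G>/(R2) are isomorphic as K-algebras: there are K-algebra  *)
(* homomorphisms in both directions (given on generators, well defined since  *)
(* they kill the relators) that are mutually inverse.                         *)
Definition pres_iso (G : Type) (R1 R2 : seq (term K G)) : Prop :=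
  exists (sigma tau : G -> term K G),
    [/\ (forall r, Stdlib.Lists.List.In r R1 -> eqv R2 (subst sigma r) Zero),
        (forall r, Stdlib.Lists.List.In r R2 -> eqv R1 (subst tau r) Zero),
        (forall g, eqv R1 (subst tau (sigma g)) (Gen g))
      & (forall g, eqv R2 (subst sigma (tau g)) (Gen g))].

End Terms.

(* The quiver Q_{D_n}: vertices 0..n-1, arrows a_i, abar_i for i = 0..n-2.  *)
(* Paths compose left to right.                                              *)

Inductive gen (n : nat) : Type :=
  | GE of 'I_n          (* trivial path e_v *)
  | GA of 'I_n.-1
  | GB of 'I_n.-1.

Definition src_a (i : nat) : nat := i.
Definition tgt_a (i : nat) : nat := if (i <= 1)%N then 2%N else i.+1.

Section DQuiver.
Variables (K : fieldType) (n : nat).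
Local Notation T := (term K (gen n)).

Definition Ev (v : nat) : T :=
  match insub v : option 'I_n with Some o => Gen (GE o) | None => Zero end.
Definition Aa (i : nat) : T :=
  match insub i : option 'I_n.-1 with Some o => Gen (GA o) | None => Zero end.
Definition Ab (i : nat) : T :=
  match insub i : option 'I_n.-1 with Some o => Gen (GB o) | None => Zero end.

(* Relations making K<generators>/(rels) the path algebra KQ_{D_n}. *)
Definition quiver_rels : seq T :=
  [seq tsub (Mul (Gen (GE v)) (Gen (GE w)))
            (if v == w then Gen (GE v) else Zero) | v : 'I_n <- enum 'I_n, w : 'I_n <- enum 'I_n]
  ++ [:: tsub (tsum [seq Gen (GE v) | v <- enum 'I_n]) One]
  ++ [seq tsub (Mul (Mul (Ev (src_a i)) (Gen (GA i))) (Ev (tgt_a i))) (Gen (GA i))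
       | i : 'I_n.-1 <- enum 'I_n.-1]
  ++ [seq tsub (Mul (Mul (Ev (tgt_a i)) (Gen (GB i))) (Ev (src_a i))) (Gen (GB i))
       | i : 'I_n.-1 <- enum 'I_n.-1].

Definition mesh (v : nat) : T :=
  tsum [seq Add (if src_a i == v then Mul (Gen (GA i)) (Gen (GB i)) else Zero)
                (if tgt_a i == v then Mul (Gen (GB i)) (Gen (GA i)) else Zero)
       | i : 'I_n.-1 <- enum 'I_n.-1].

Definition P_rels : seq T := quiver_rels ++ [seq mesh v | v <- iota 0 n].

Definition Pstar_rels : seq T :=
  quiver_rels ++ [seq mesh v | v <- iota 0 n & v != 2%N]
  ++ [:: Add (Add (Add (Mul (Ab 0) (Aa 0)) (Mul (Ab 1) (Aa 1))) (Mul (Aa 2) (Ab 2)))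
             (tpow (Mul (Mul (Mul (Ab 0) (Aa 0)) (Ab 1)) (Aa 1)) (n./2 - 1)%N);
         tpow (Add (Mul (Ab 0) (Aa 0)) (Mul (Ab 1) (Aa 1))) (n - 2)%N].

End DQuiver.

From HB Require Import structures.
From mathcomp Require Import all_boot all_order all_algebra.
From mathcomp Require Import zify ring.
From mathcomp Require boolp.
From Stdlib Require Lists.List.
Import Stdlib.Lists.List (In).
Set Implicit Arguments. Unset Strict Implicit. Unset Printing Implicit Defensive.
Import GRing.Theory.
Local Open Scope ring_scope.

(* Write x = abar_0 a_0 and y = abar_1 a_1 for the two cycles at vertex 2, m = n/2,
   k = m - 2, s = (xy)^(m-1) and p = x (yx)^k.  In both algebras a_0 abar_0 = a_1 abar_1 = 0,
   so x^2 = y^2 = 0 and (x + y)^(n-2) = (xy)^(m-1) + (yx)^(m-1).  This vanishes in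
   P^*(D_n) by definition, and in P(D_n) because the mesh relations along the arm
   2 - 3 - ... - (n-1) force (a_2 abar_2)^(n-2) = 0.  Hence p^2 = 0 and py = s = -yp, so
   for central c the substitution a_1 -> a_1 + c a_1 p, abar_1 -> abar_1 - c p abar_1
   fixes a_1 abar_1 and p and replaces y by y - 2cs.  For c = 1/2 it carries the mesh
   relation at 2 of P(D_n) to the deformed relation of P^*(D_n), for c = -1/2 back, and
   the two substitutions are mutually inverse.  To argue with ring identities, each
   presented algebra is realised as the ring of eqv-classes of terms. *)

Lemma In_mem (T : eqType) (x : T) (s : seq T) : In x s <-> x \in s.
Proof.
elim: s => //= y s IH; rewrite in_cons; split.
- by case=> [->|/IH->]; rewrite ?eqxx ?orbT.
- by case/orP=> [/eqP->|/IH]; [left|right].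
Qed.

Lemma forall_In_cat T (P : T -> Prop) (s1 s2 : seq T) :
  (forall r, In r (s1 ++ s2) -> P r) <->
  (forall r, In r s1 -> P r) /\ (forall r, In r s2 -> P r).
Proof. by rewrite -!List.Forall_forall; apply: List.Forall_app. Qed.

Lemma forall_In_map T U (P : U -> Prop) (F : T -> U) (s : seq T) :
  (forall r, In r (map F s) -> P r) <-> (forall x, In x s -> P (F x)).
Proof. by rewrite -!List.Forall_forall; apply: List.Forall_map. Qed.

Lemma forall_In_allpairs S T U (P : U -> Prop) (F : S -> T -> U) s t :
  (forall r, In r [seq F x y | x <- s, y <- t] -> P r) <->
  (forall x y, In x s -> In y t -> P (F x y)).
Proof.
split=> H.
  move=> x y xs yt; apply: H; apply/List.in_concat; exists [seq F x y | y <- t].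
  split; first exact: (List.in_map (fun x => [seq F x y | y <- t]) s x xs).
  exact: (List.in_map (F x) t y yt).
move=> r /List.in_concat [_ [/List.in_map_iff [x [<- xs]] /List.in_map_iff [y [<- yt]]]].
exact: H.
Qed.

Lemma forall_In_pair T (P : T -> Prop) (x y : T) :
  (forall r, In r [:: x; y] -> P r) <-> P x /\ P y.
Proof. by split=> [H | [Px Py] r [<-|[<-|[]]]] //; split; apply: H; [left|right; left]. Qed.

Lemma In_enum (T : finType) (x : T) : In x (enum T).
Proof. by apply/In_mem; rewrite mem_enum. Qed.

Section Evaluation.
Variables (K : fieldType) (A : pzRingType) (kc : K -> A).

Fixpoint ev (G : Type) (f : G -> A) (t : term K G) : A :=
  match t with
  | Gen g => f g
  | Zero => 0
  | One => 1
  | Add x y => ev f x + ev f y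
  | Mul x y => ev f x * ev f y
  | Scale c x => kc c * ev f x
  end.

Lemma ev_subst G G' (f : G' -> A) (s : G -> term K G') t :
  ev f (subst s t) = ev (fun g => ev f (s g)) t.
Proof. by elim: t => //= [x -> y ->|x -> y ->|c x ->]. Qed.

Lemma ev_tpow G (f : G -> A) x k : ev f (tpow x k) = ev f x ^+ k.
Proof. by elim: k => //= k ->; rewrite exprS. Qed.

Lemma ev_tsum G (f : G -> A) s : ev f (tsum s) = \sum_(x <- s) ev f x.
Proof. by elim: s => [|x s IH]; rewrite ?big_nil ?big_cons //= IH. Qed.

Lemma ev_tsub G (f : G -> A) x y :
  kc (-1) = -1 -> ev f (tsub x y) = ev f x - ev f y.
Proof. by move=> kcN1; rewrite /= kcN1 mulN1r. Qed.

End Evaluation.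

(* K<G>/(R): a class is represented by the predicate [eqv R t]. *)
Definition pres_alg (K : fieldType) (G : Type) (R : seq (term K G)) :=
  {P : term K G -> Prop | exists t, P = eqv R t}.

HB.instance Definition _ K G R := boolp.gen_eqMixin (@pres_alg K G R).
HB.instance Definition _ K G R := boolp.gen_choiceMixin (@pres_alg K G R).

Section PresentedAlgebra.
Variables (K : fieldType) (G : Type) (R : seq (term K G)).
Local Notation Q := (pres_alg R).
Local Notation T := (term K G).

Definition cl (t : T) : Q := exist _ (eqv R t) (ex_intro _ t erefl).

Lemma cl_eqP x y : cl x = cl y <-> eqv R x y.
Proof.
split=> [/(congr1 sval) /= Exy | xy].
  by apply: eqv_sym; rewrite -Exy; apply: eqv_refl.
apply: boolp.eq_exist; apply: boolp.funext => z; apply: boolp.propext.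
by split=> Hz; [apply: eqv_trans (eqv_sym xy) Hz | apply: eqv_trans xy Hz].
Qed.

Lemma cl_surj (q : Q) : exists t, q = cl t.
Proof. by case: q => P [t Pt]; exists t; subst P; apply: boolp.eq_exist. Qed.

Definition cl_repr (q : Q) : T := sval (boolp.cid (cl_surj q)).

Lemma cl_reprK q : cl (cl_repr q) = q.
Proof. by rewrite /cl_repr; case: boolp.cid => t /= ->. Qed.

Lemma eqv_cl_repr t : eqv R (cl_repr (cl t)) t.
Proof. by apply/cl_eqP; rewrite cl_reprK. Qed.

Definition cl_add (p q : Q) : Q := cl (Add (cl_repr p) (cl_repr q)).
Definition cl_mul (p q : Q) : Q := cl (Mul (cl_repr p) (cl_repr q)).
Definition cl_opp (p : Q) : Q := cl (Scale (-1) (cl_repr p)).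

Lemma cl_addE x y : cl_add (cl x) (cl y) = cl (Add x y).
Proof. by apply/cl_eqP; apply: eqv_add; apply: eqv_cl_repr. Qed.
Lemma cl_mulE x y : cl_mul (cl x) (cl y) = cl (Mul x y).
Proof. by apply/cl_eqP; apply: eqv_mul; apply: eqv_cl_repr. Qed.
Lemma cl_oppE x : cl_opp (cl x) = cl (Scale (-1) x).
Proof. by apply/cl_eqP; apply: eqv_scale; apply: eqv_cl_repr. Qed.

Local Ltac cl_elim := repeat match goal with q : Q |- _ =>
  let t := fresh "t" in have [t ->] := cl_surj q; clear q end.

Lemma cl_addA : associative cl_add.
Proof. by move=> *; cl_elim; rewrite !cl_addE; apply/cl_eqP; apply: eqv_addA. Qed.
Lemma cl_addC : commutative cl_add.
Proof. by move=> *; cl_elim; rewrite !cl_addE; apply/cl_eqP; apply: eqv_addC. Qed.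
Lemma cl_add0 : left_id (cl Zero) cl_add.
Proof. by move=> *; cl_elim; rewrite cl_addE; apply/cl_eqP; apply: eqv_add0. Qed.
Lemma cl_addN : left_inverse (cl Zero) cl_opp cl_add.
Proof.
move=> *; cl_elim; rewrite cl_oppE cl_addE; apply/cl_eqP.
by apply: eqv_trans (eqv_addN _ t); apply: eqv_addC.
Qed.

HB.instance Definition _ := GRing.isZmodule.Build Q cl_addA cl_addC cl_add0 cl_addN.

Lemma cl_mulA : associative cl_mul.
Proof. by move=> *; cl_elim; rewrite !cl_mulE; apply/cl_eqP; apply: eqv_mulA. Qed.
Lemma cl_mul1 : left_id (cl One) cl_mul.
Proof. by move=> *; cl_elim; rewrite cl_mulE; apply/cl_eqP; apply: eqv_mul1l. Qed.
Lemma cl_mulr1 : right_id (cl One) cl_mul.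
Proof. by move=> *; cl_elim; rewrite cl_mulE; apply/cl_eqP; apply: eqv_mul1r. Qed.
Lemma cl_mulDl : left_distributive cl_mul cl_add.
Proof. by move=> *; cl_elim; rewrite !(cl_addE, cl_mulE); apply/cl_eqP; apply: eqv_mulDl. Qed.
Lemma cl_mulDr : right_distributive cl_mul cl_add.
Proof. by move=> *; cl_elim; rewrite !(cl_addE, cl_mulE); apply/cl_eqP; apply: eqv_mulDr. Qed.

HB.instance Definition _ :=
  GRing.Zmodule_isPzRing.Build Q cl_mulA cl_mul1 cl_mulr1 cl_mulDl cl_mulDr.

Lemma clD x y : cl (Add x y) = cl x + cl y.
Proof. exact: esym (cl_addE x y). Qed.
Lemma clM x y : cl (Mul x y) = cl x * cl y.
Proof. exact: esym (cl_mulE x y). Qed.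

Definition scal (c : K) : Q := cl (Scale c One).

Lemma scal_mulE c x : cl (Scale c x) = scal c * cl x.
Proof.
rewrite -clM; apply/cl_eqP.
apply: eqv_trans (eqv_scaleMl _ _ _ _).
exact/eqv_scale/eqv_sym/eqv_mul1l.
Qed.

Lemma scal_central c q : scal c * q = q * scal c.
Proof.
have [t ->] := cl_surj q; rewrite -!clM; apply/cl_eqP.
apply: eqv_trans (eqv_sym (eqv_scaleMl _ _ _ _)) _.
apply: eqv_trans _ (eqv_scaleMr _ _ _ _).
exact/eqv_scale/(eqv_trans (eqv_mul1l _ _))/eqv_sym/eqv_mul1r.
Qed.

Lemma scalD c d : scal (c + d) = scal c + scal d.
Proof. by rewrite -clD; apply/cl_eqP; apply: eqv_scaleDl. Qed.

Lemma scal1 : scal 1 = 1.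
Proof. by apply/cl_eqP; apply: eqv_scale1. Qed.

Lemma scalN c : scal (- c) = - scal c.
Proof.
apply/eqP; rewrite -addr_eq0 -scalD addNr.
by rewrite -(addrK (scal 0) (scal 0)) -scalD addr0 subrr.
Qed.

Definition cl_gen (g : G) : Q := cl (Gen g).

Lemma cl_ev t : cl t = ev scal cl_gen t.
Proof.
by elim: t => //= [x <- y <-|x <- y <-|c x <-]; rewrite ?clD ?clM ?scal_mulE.
Qed.

Lemma eqv_evP x y : eqv R x y <-> ev scal cl_gen x = ev scal cl_gen y.
Proof. by rewrite -!cl_ev; split=> /cl_eqP. Qed.

Lemma ev_rel r : In r R -> ev scal cl_gen r = 0.
Proof. by move=> Rr; rewrite -cl_ev; apply/cl_eqP/eqv_rel. Qed.

End PresentedAlgebra.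

Section RingIdentities.
Variable A : pzRingType.
Implicit Types (x y u v c e z : A).

Lemma mulr_exp_shift x y k : x * (y * x) ^+ k = (x * y) ^+ k * x.
Proof.
elim: k => [|k IH]; first by rewrite !expr0 mulr1 mul1r.
by rewrite exprS mulrA (mulrA x y x) -mulrA IH mulrA -exprS.
Qed.

Lemma exprS_shift x y k : (x * y) ^+ k.+1 = x * (y * x) ^+ k * y.
Proof. by rewrite mulr_exp_shift exprSr mulrA. Qed.

Lemma expr_add_orth u v j :
  u * v = 0 -> v * u = 0 -> (u + v) ^+ j.+1 = u ^+ j.+1 + v ^+ j.+1.
Proof.
move=> uv vu; elim: j => [|j IH]; first by rewrite !expr1.
have uvj : u * v ^+ j.+1 = 0 by rewrite exprS mulrA uv mul0r.
have vuj : v * u ^+ j.+1 = 0 by rewrite exprS mulrA vu mul0r.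
by rewrite exprS IH mulrDl !mulrDr uvj vuj addr0 add0r -!exprS.
Qed.

Lemma sqr0_swap u v : u * v = 0 -> v * u * (v * u) = 0.
Proof. by move=> uv; rewrite -mulrA (mulrA u) uv mul0r mulr0. Qed.

Lemma expr_add_sqr0 x y k : x * x = 0 -> y * y = 0 ->
  (x + y) ^+ (k.+1).*2 = (x * y) ^+ k.+1 + (y * x) ^+ k.+1.
Proof.
move=> xx yy; have sqr : (x + y) ^+ 2 = x * y + y * x.
  by rewrite expr2 mulrDl !mulrDr xx yy add0r addr0.
rewrite -mul2n exprM sqr expr_add_orth //.
- by rewrite -mulrA (mulrA y) yy mul0r mulr0.
- by rewrite -mulrA (mulrA x) xx mul0r mulr0.
Qed.

Lemma idem_absorb_r e (e' : A) z : e * e = e -> e' * z * e = z -> z * e = z.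
Proof. by move=> ee ze; rewrite -{1}ze -mulrA ee ze. Qed.

Lemma idem_absorb_l e (e' : A) z : e' * e' = e' -> e' * z * e = z -> e' * z = z.
Proof. by move=> ee ze; rewrite -{1}ze !mulrA ee ze. Qed.

Lemma mulr_central c u v : (forall z, c * z = z * c) -> u * (c * v) = c * (u * v).
Proof. by move=> cC; rewrite mulrA -cC mulrA. Qed.

Lemma centralN c : (forall z, c * z = z * c) -> forall z, - c * z = z * - c.
Proof. by move=> cC z; rewrite mulNr mulrN cC. Qed.

Section CentralDeformation.
Variables (c p : A).
Hypotheses (cC : forall z, c * z = z * c) (pp : p * p = 0).

Lemma deform_mul_ab a b : (a + c * (a * p)) * (b - c * (p * b)) = a * b.
Proof.
have appb : a * p * (p * b) = 0 by rewrite mulrA -(mulrA a) pp mulr0 mul0r.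
rewrite mulrDl !mulrBr !(mulr_central _ _ cC) -!(mulrA c (a * p)) appb -(mulrA a p b).
by rewrite mulr0 mulr0 subr0 subrK.
Qed.

Lemma deform_mul_ba y s a b : p * y = s -> y * p = - s -> s * p = 0 -> b * a = y ->
  (b - c * (p * b)) * (a + c * (a * p)) = y - (c + c) * s.
Proof.
move=> py yp sp ba.
have pbap : p * b * (a * p) = 0 by rewrite mulrA -(mulrA p) ba py sp.
rewrite mulrBl !mulrDr !(mulr_central _ _ cC) -!(mulrA c (p * b)) pbap !mulr0 addr0.
by rewrite -(mulrA p b a) (mulrA b a p) ba py yp mulrN mulrDl opprD addrA.
Qed.

Lemma deformK_left a : a + c * (a * p) + - c * ((a + c * (a * p)) * p) = a.
Proof. by rewrite mulrDl -!mulrA pp !mulr0 addr0 mulNr addrK. Qed.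

Lemma deformK_right b : b - c * (p * b) - - c * (p * (b - c * (p * b))) = b.
Proof.
by rewrite mulrBr (mulr_central _ _ cC) (mulrA p p) pp mul0r mulr0 subr0 mulNr opprK subrK.
Qed.

End CentralDeformation.

Section NilpotentProduct.
Variables (x y : A) (k : nat).
Hypotheses (xx : x * x = 0) (xy_nil : (x * y) ^+ k.+1 + (y * x) ^+ k.+1 = 0).
Local Notation s := ((x * y) ^+ k.+1).
Local Notation p := (x * (y * x) ^+ k).

Lemma mul_x_s : x * s = 0.
Proof. by rewrite exprS !mulrA xx !mul0r. Qed.

Lemma mul_s_x : s * x = 0.
Proof.
have := congr1 (GRing.mul x) xy_nil.
by rewrite mulr0 mulrDr mul_x_s add0r mulr_exp_shift.
Qed.

Lemma mul_p_p : p * p = 0.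
Proof. by rewrite {1}mulr_exp_shift -mulrA (mulrA x) xx mul0r mulr0. Qed.

Lemma mul_p_y : p * y = s.
Proof. by rewrite mulr_exp_shift -mulrA -exprSr. Qed.

Lemma mul_y_p : y * p = - s.
Proof. by rewrite mulrA -exprS; apply/eqP; rewrite -addr_eq0 addrC xy_nil. Qed.

Lemma mul_s_p : s * p = 0.
Proof. by rewrite mulrA mul_s_x mul0r. Qed.

Lemma shift_mul_l d : (forall z, d * z = z * d) -> x * (y - d * s) = x * y.
Proof. by move=> dC; rewrite mulrBr (mulr_central _ _ dC) mul_x_s mulr0 subr0. Qed.

Lemma shift_mul_r d : (y - d * s) * x = y * x.
Proof. by rewrite mulrBl -mulrA mul_s_x mulr0 subr0. Qed.

Lemma shift_sqr0 d : (forall z, d * z = z * d) -> y * y = 0 ->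
  (y - d * s) * (y - d * s) = 0.
Proof.
move=> dC yy.
have ys : y * s = 0.
  have := congr1 (GRing.mul y) xy_nil.
  by rewrite mulr0 mulrDr [(y * x) ^+ _]exprS !mulrA yy !mul0r addr0.
have sy : s * y = 0 by rewrite exprSr -!mulrA yy !mulr0.
have ss : s * s = 0 by rewrite {2}exprS !mulrA mul_s_x !mul0r.
rewrite mulrBl !mulrBr yy !(mulr_central _ _ dC) ys -!mulrA sy ss.
by rewrite !mulr0 !subr0.
Qed.

End NilpotentProduct.
End RingIdentities.

Section DQuiverRepresentation.
Variables (K : fieldType) (n : nat) (A : pzRingType) (kc : K -> A).
Hypothesis kcN1 : kc (-1) = -1.
Implicit Type f : gen n -> A.
Local Notation ev := (ev kc).

Definition vert f v := ev f (Ev K n v).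
Definition arr f i := ev f (Aa K n i).
Definition barr f i := ev f (Ab K n i).

Lemma arr_ord f (i : 'I_n.-1) : arr f i = f (GA i).
Proof. by rewrite /arr /Aa valK. Qed.
Lemma barr_ord f (i : 'I_n.-1) : barr f i = f (GB i).
Proof. by rewrite /barr /Ab valK. Qed.

Lemma ev_tsub0 f x y : ev f (tsub x y) = 0 <-> ev f x = ev f y.
Proof. by rewrite ev_tsub //; split=> [/subr0_eq | ->]; last exact: subrr. Qed.

Definition quiver_ok f :=
  [/\ forall v w : 'I_n, f (GE v) * f (GE w) = if v == w then f (GE v) else 0,
      \sum_(v <- enum 'I_n) f (GE v) = 1,
      forall i : 'I_n.-1, vert f (src_a i) * f (GA i) * vert f (tgt_a i) = f (GA i) &
      forall i : 'I_n.-1, vert f (tgt_a i) * f (GB i) * vert f (src_a i) = f (GB i)].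

Lemma quiver_relsP f :
  (forall r, In r (quiver_rels K n) -> ev f r = 0) <-> quiver_ok f.
Proof.
rewrite /quiver_rels !forall_In_cat forall_In_allpairs !forall_In_map.
split=> [[idem [sum1 [arrA arrB]]] | [idem sum1 arrA arrB]].
- rewrite -!enumT in arrA arrB; split.
  + move=> v w; have /ev_tsub0 /= := idem v w (In_enum v) (In_enum w).
    by case: (v == w).
  + by have /ev_tsub0 := sum1 _ (or_introl erefl); rewrite ev_tsum big_map.
  + by move=> i; have /ev_tsub0 := arrA i (In_enum i).
  + by move=> i; have /ev_tsub0 := arrB i (In_enum i).
- split; last split; last split.
  + by move=> v w _ _; apply/ev_tsub0 => /=; rewrite idem; case: (v == w).
  + by move=> r [<-|[]]; apply/ev_tsub0; rewrite ev_tsum big_map.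
  + by move=> i _; apply/ev_tsub0; apply: arrA.
  + by move=> i _; apply/ev_tsub0; apply: arrB.
Qed.

Section QuiverOk.
Variable f : gen n -> A.
Hypothesis qf : quiver_ok f.

Lemma vert_idem v : vert f v * vert f v = vert f v.
Proof.
rewrite /vert /Ev; case: insubP => [o _ _|_] /=; last by rewrite mulr0.
by case: qf => idem _ _ _; rewrite idem eqxx.
Qed.

Lemma arr_vert i : (i < n.-1)%N -> arr f i * vert f (tgt_a i) = arr f i.
Proof.
case: qf => _ _ arrA _ i_lt; apply: (idem_absorb_r (e' := vert f (src_a i)) (vert_idem _)).
by have := arrA (Ordinal i_lt); rewrite -arr_ord.
Qed.

Lemma vert_arr i : (i < n.-1)%N -> vert f (src_a i) * arr f i = arr f i.
Proof.
case: qf => _ _ arrA _ i_lt; apply: (idem_absorb_l (e := vert f (tgt_a i)) (vert_idem _)).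
by have := arrA (Ordinal i_lt); rewrite -arr_ord.
Qed.

Lemma barr_vert i : (i < n.-1)%N -> barr f i * vert f (src_a i) = barr f i.
Proof.
case: qf => _ _ _ arrB i_lt; apply: (idem_absorb_r (e' := vert f (tgt_a i)) (vert_idem _)).
by have := arrB (Ordinal i_lt); rewrite -barr_ord.
Qed.

Lemma vert_barr i : (i < n.-1)%N -> vert f (tgt_a i) * barr f i = barr f i.
Proof.
case: qf => _ _ _ arrB i_lt; apply: (idem_absorb_l (e := vert f (src_a i)) (vert_idem _)).
by have := arrB (Ordinal i_lt); rewrite -barr_ord.
Qed.

End QuiverOk.

Definition mesh_term (a b : nat -> A) v j :=
  (if src_a j == v then a j * b j else 0) + (if tgt_a j == v then b j * a j else 0).

Definition mesh_sum a b v := \sum_(0 <= j < n.-1) mesh_term a b v j.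

Lemma ev_mesh f v : ev f (mesh K n v) = mesh_sum (arr f) (barr f) v.
Proof.
rewrite /mesh ev_tsum big_map big_enum /= /mesh_sum big_mkord.
by apply: eq_bigr => i _; rewrite /mesh_term arr_ord barr_ord; case: (_ == v); case: (_ == v).
Qed.

Lemma eq_mesh_sum (a b a' b' : nat -> A) v : v != 1%N -> v != 2%N ->
  (forall j, j != 1%N -> a j = a' j) -> (forall j, j != 1%N -> b j = b' j) ->
  mesh_sum a b v = mesh_sum a' b' v.
Proof.
move=> v1 v2 aa' bb'; apply: eq_bigr => j _.
have [->|j1] := eqVneq j 1%N; last by rewrite /mesh_term aa' ?bb'.
by rewrite /mesh_term /src_a /tgt_a /= !(eq_sym _ v) (negbTE v1) (negbTE v2).
Qed.

Lemma mesh_term_far a b v j : (v < j)%N -> mesh_term a b v j = 0.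
Proof.
move=> vj; rewrite /mesh_term /src_a /tgt_a (ifN _ _ (_ : j != v)); last by lia.
by rewrite add0r ifN //; case: ifP => ?; lia.
Qed.

Lemma mesh_term_near a b v j : (2 < v)%N -> (j.+1 < v)%N -> mesh_term a b v j = 0.
Proof.
move=> v3 jv; rewrite /mesh_term /src_a /tgt_a (ifN _ _ (_ : j != v)); last by lia.
by rewrite add0r ifN //; case: ifP => ?; lia.
Qed.

Local Notation mesh_of f := (mesh_sum (arr f) (barr f)).
Local Notation k := (n./2 - 2)%N.
Definition xf f := barr f 0 * arr f 0.
Definition yf f := barr f 1 * arr f 1.

Definition P_ok f := quiver_ok f /\ forall v, (v < n)%N -> mesh_of f v = 0.

Definition Pstar_ok f :=
  [/\ quiver_ok f, forall v, (v < n)%N -> v != 2%N -> mesh_of f v = 0,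
      mesh_of f 2 + (xf f * yf f) ^+ (n./2 - 1) = 0 & (xf f + yf f) ^+ (n - 2) = 0].

Lemma P_relsP f : (forall r, In r (P_rels K n) -> ev f r = 0) <-> P_ok f.
Proof.
rewrite /P_rels forall_In_cat quiver_relsP // forall_In_map.
split=> -[q m]; split=> // v.
- by move=> vn; rewrite -ev_mesh; apply: m; apply/List.in_seq; lia.
- by move=> /List.in_seq vn; rewrite ev_mesh; apply: m; lia.
Qed.

Hypothesis n4 : (4 <= n)%N.

Lemma mesh_sum_low a b v : (v <= 2)%N ->
  mesh_sum a b v = \sum_(0 <= j < 3) mesh_term a b v j.
Proof.
move=> v2; rewrite /mesh_sum (big_cat_nat _ (n := 3)) //=; last by lia.
rewrite [X in _ + X]big_nat_cond [X in _ + X]big1 ?addr0 // => j /andP [/andP [j3 _] _].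
by apply: mesh_term_far; lia.
Qed.

Lemma mesh_sum0 a b : mesh_sum a b 0 = a 0%N * b 0%N.
Proof. by rewrite mesh_sum_low // !big_nat_recl // big_geq //= /mesh_term /= !(addr0, add0r). Qed.
Lemma mesh_sum1 a b : mesh_sum a b 1 = a 1%N * b 1%N.
Proof. by rewrite mesh_sum_low // !big_nat_recl // big_geq //= /mesh_term /= !(addr0, add0r). Qed.
Lemma mesh_sum2 a b : mesh_sum a b 2 = b 0%N * a 0%N + b 1%N * a 1%N + a 2%N * b 2%N.
Proof. by rewrite mesh_sum_low // !big_nat_recl // big_geq //= /mesh_term /= !(addr0, add0r) addrA. Qed.

Lemma mesh_sum_mid a b v : (3 <= v < n)%N ->
  mesh_sum a b v = b v.-1 * a v.-1 + (if (v < n.-1)%N then a v * b v else 0).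
Proof.
move=> /andP [v3 vn]; rewrite /mesh_sum (big_cat_nat _ (n := v.-1)) //=; last by lia.
rewrite big_nat_cond big1 ?add0r => [|j /andP [/andP [_ jv] _]]; last first.
  by apply: mesh_term_near; lia.
have v1 : v.-1.+1 = v by lia.
rewrite big_ltn ?v1; last by lia.
have -> : mesh_term a b v v.-1 = b v.-1 * a v.-1.
  rewrite /mesh_term /src_a /tgt_a ifN ?add0r; last by lia.
  by rewrite (ifN _ _ (_ : ~~ (v.-1 <= 1)%N)) ?v1 ?eqxx //; lia.
congr (_ + _); case: ifP => vn1; last by rewrite big_geq //; lia.
rewrite big_ltn //.
have -> : \sum_(v.+1 <= j < n.-1) mesh_term a b v j = 0.
  by rewrite big_nat_cond big1 // => j /andP [/andP [vj _] _]; apply: mesh_term_far.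
rewrite addr0 /mesh_term /src_a eqxx ifN ?addr0 //.
by rewrite /tgt_a; case: ifP => ?; lia.
Qed.

Lemma mesh_arm_nilpotent a b : (forall v, (3 <= v < n)%N -> mesh_sum a b v = 0) ->
  (a 2%N * b 2%N) ^+ (n - 2) = 0.
Proof.
move=> mesh0.
suff nil_i j i : (i + j = n - 2)%N -> (2 <= i)%N -> (a i * b i) ^+ j.+2 = 0.
  have -> : (n - 2 = (n - 4).+2)%N by lia.
  by apply: nil_i; lia.
elim: j i => [|j IH] i ij i2; have mesh_i : mesh_sum a b i.+1 = 0 by apply: mesh0; lia.
  move: mesh_i; rewrite mesh_sum_mid /= ?ifN ?addr0; [|lia|lia].
  by rewrite exprS_shift expr1 => ->; rewrite mulr0 mul0r.
move: mesh_i; rewrite mesh_sum_mid /= ?ifT; [|lia|lia].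
move=> /eqP; rewrite addr_eq0 => /eqP ba.
by rewrite exprS_shift ba exprNn (IH i.+1) ?mulr0 ?mul0r //; lia.
Qed.

Lemma Pstar_relsP f : (forall r, In r (Pstar_rels K n) -> ev f r = 0) <-> Pstar_ok f.
Proof.
rewrite /Pstar_rels forall_In_cat quiver_relsP // forall_In_cat forall_In_map forall_In_pair.
rewrite [ev f (Add _ _)]/= !ev_tpow [ev f (Add _ _)]/= [ev f (Mul _ _)]/=.
rewrite -[ev f (Ab K n 0)]/(barr f 0) -[ev f (Aa K n 0)]/(arr f 0).
rewrite -[ev f (Ab K n 1)]/(barr f 1) -[ev f (Aa K n 1)]/(arr f 1).
rewrite -[ev f (Ab K n 2)]/(barr f 2) -[ev f (Aa K n 2)]/(arr f 2).
rewrite -(mulrA (barr f 0 * arr f 0)) -/(xf f) -/(yf f) -mesh_sum2.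
split=> [[q [m [rel2 nil]]] | [q m rel2 nil]].
- split=> // v vn v2; rewrite -ev_mesh; apply: m.
  by apply/List.filter_In; split=> //; apply/List.in_seq; lia.
- split=> //; split=> [v /List.filter_In [/List.in_seq vn v2] | //].
  by rewrite ev_mesh; apply: m => //; lia.
Qed.

Definition xT : term K (gen n) := Mul (Ab K n 0) (Aa K n 0).
Definition yT : term K (gen n) := Mul (Ab K n 1) (Aa K n 1).
Definition pT : term K (gen n) := Mul xT (tpow (Mul yT xT) (n./2 - 2)).
Definition pf f := ev f pT.

Lemma pfE f : pf f = xf f * (yf f * xf f) ^+ k.
Proof. by rewrite /pf /= ev_tpow. Qed.

Definition deform f (c : A) (g : gen n) : A :=
  match g with
  | GA i => if val i == 1%N then arr f 1 + c * (arr f 1 * pf f) else f g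
  | GB i => if val i == 1%N then barr f 1 - c * (pf f * barr f 1) else f g
  | GE _ => f g
  end.

Definition deformT (c : K) (g : gen n) : term K (gen n) :=
  match g with
  | GA i => if val i == 1%N then Add (Aa K n 1) (Scale c (Mul (Aa K n 1) pT)) else Gen g
  | GB i => if val i == 1%N then Add (Ab K n 1) (Scale (- c) (Mul pT (Ab K n 1))) else Gen g
  | GE _ => Gen g
  end.

Lemma ev_deformT f c g : kc (- c) = - kc c -> ev f (deformT c g) = deform f (kc c) g.
Proof. by move=> kcN; case: g => [v|i|i] //=; case: ifP => //= _; rewrite kcN mulNr. Qed.

Lemma one_lt_arrows : (1 < n.-1)%N.
Proof. by lia. Qed.

Lemma vert_deform f c v : vert (deform f c) v = vert f v.
Proof. by rewrite /vert /Ev; case: insub. Qed.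

Lemma arr_deform f c i : i != 1%N -> arr (deform f c) i = arr f i.
Proof. by move=> i1; rewrite /arr /Aa; case: insubP => [o _ oi|_] //=; rewrite oi ifN. Qed.

Lemma barr_deform f c i : i != 1%N -> barr (deform f c) i = barr f i.
Proof. by move=> i1; rewrite /barr /Ab; case: insubP => [o _ oi|_] //=; rewrite oi ifN. Qed.

Lemma arr_deform1 f c : arr (deform f c) 1 = arr f 1 + c * (arr f 1 * pf f).
Proof. by rewrite {1}/arr /Aa insubT ?one_lt_arrows. Qed.

Lemma barr_deform1 f c : barr (deform f c) 1 = barr f 1 - c * (pf f * barr f 1).
Proof. by rewrite {1}/barr /Ab insubT ?one_lt_arrows. Qed.

Lemma xf_deform f c : xf (deform f c) = xf f.
Proof. by rewrite /xf arr_deform ?barr_deform. Qed.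

Definition deformable f :=
  [/\ arr f 0 * barr f 0 = 0, arr f 1 * barr f 1 = 0 &
      (xf f * yf f) ^+ k.+1 + (yf f * xf f) ^+ k.+1 = 0].

Section Deformation.
Variables (c : A) (f : gen n -> A).
Hypotheses (cC : forall z, c * z = z * c) (nf : deformable f).
Local Notation s := ((xf f * yf f) ^+ k.+1).

Lemma xf_sqr0 : xf f * xf f = 0.
Proof. by case: nf => a0b0 _ _; apply: sqr0_swap. Qed.

Lemma pf_sqr0 : pf f * pf f = 0.
Proof. by case: nf => _ _ nil; rewrite pfE (mul_p_p _ _ xf_sqr0). Qed.

Lemma yf_deform : yf (deform f c) = yf f - (c + c) * s.
Proof.
case: nf => _ _ nil; rewrite [yf _]/yf arr_deform1 barr_deform1.
by rewrite (deform_mul_ba (y := yf f) (s := s) cC) // pfE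
  ?mul_p_y ?(mul_y_p nil) ?(mul_s_p xf_sqr0 nil).
Qed.

Lemma pf_deform : pf (deform f c) = pf f.
Proof. by case: nf => _ _ nil; rewrite !pfE xf_deform yf_deform (shift_mul_r xf_sqr0 nil). Qed.

Lemma mesh_deform v : v != 2%N -> mesh_of (deform f c) v = mesh_of f v.
Proof.
move=> v2; have [->|v1] := eqVneq v 1%N.
  by rewrite !mesh_sum1 // arr_deform1 barr_deform1 deform_mul_ab // pf_sqr0.
by apply: eq_mesh_sum => // j j1; rewrite ?arr_deform ?barr_deform.
Qed.

Lemma mesh_deform2 : mesh_of (deform f c) 2 = mesh_of f 2 - (c + c) * s.
Proof.
rewrite !mesh_sum2 // -/(xf (deform f c)) -/(yf (deform f c)) xf_deform yf_deform.
by rewrite arr_deform ?barr_deform // -/(xf f) -/(yf f) addrA [RHS]addrAC.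
Qed.

Lemma quiver_ok_deform : quiver_ok f -> quiver_ok (deform f c).
Proof.
move=> qf; have [idem sum1 arrA arrB] := qf.
have lt0 : (0 < n.-1)%N by lia.
have pe2 : pf f * vert f 2 = pf f.
  by rewrite pfE mulr_exp_shift /xf -!mulrA (arr_vert qf lt0).
have e2p : vert f 2 * pf f = pf f.
  by rewrite pfE /xf !mulrA (vert_barr qf lt0).
split=> // i; rewrite !vert_deform /=; case: eqP => [i1|_]; rewrite ?arrA ?arrB //.
- rewrite i1 -[src_a 1]/1%N -[tgt_a 1]/2%N mulrDr mulrDl.
  rewrite (vert_arr qf one_lt_arrows) (arr_vert qf one_lt_arrows) (mulr_central _ _ cC).
  by rewrite (mulrA (vert f 1)) (vert_arr qf one_lt_arrows) -(mulrA c) -(mulrA (arr f 1)) pe2.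
- rewrite i1 -[src_a 1]/1%N -[tgt_a 1]/2%N mulrBr mulrBl.
  rewrite (vert_barr qf one_lt_arrows) (barr_vert qf one_lt_arrows) (mulr_central _ _ cC).
  by rewrite (mulrA (vert f 2)) e2p -(mulrA c) -(mulrA (pf f)) (barr_vert qf one_lt_arrows).
Qed.

Lemma deformK : deform (deform f c) (- c) =1 f.
Proof.
case=> [v|i|i] //=; case: eqP => [i1|_] //.
- by rewrite arr_deform1 pf_deform (deformK_left _ pf_sqr0) -i1 arr_ord.
- by rewrite barr_deform1 pf_deform (deformK_right cC pf_sqr0) -i1 barr_ord.
Qed.

End Deformation.

Lemma deformNK c f : (forall z, c * z = z * c) -> deformable f -> deform (deform f (- c)) c =1 f.
Proof. by move=> cC nf g; rewrite -{2}(opprK c); apply: (deformK (centralN cC) nf). Qed.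

Hypothesis n_even : ~~ odd n.

Lemma half_pred : (n./2 - 1 = k.+1)%N.
Proof. by have := odd_double_half n; rewrite (negbTE n_even) add0n -muln2; lia. Qed.

Lemma sub2_double : (n - 2 = k.+1.*2)%N.
Proof. by have := odd_double_half n; rewrite (negbTE n_even) add0n -!muln2; lia. Qed.

Lemma P_ok_deformable f : P_ok f -> deformable f.
Proof.
case=> _ m.
have a0b0 : arr f 0 * barr f 0 = 0 by rewrite -mesh_sum0 //; apply: m; lia.
have a1b1 : arr f 1 * barr f 1 = 0 by rewrite -mesh_sum1 //; apply: m; lia.
split=> //; rewrite -expr_add_sqr0 ?sqr0_swap // -sub2_double.
have := mesh_arm_nilpotent (fun v v3n => m v (proj2 (andP v3n))).
have /eqP : mesh_of f 2 = 0 by apply: m; lia.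
rewrite mesh_sum2 // addr_eq0 => /eqP ->.
by rewrite sub2_double -mul2n !exprM sqrrN.
Qed.

Lemma Pstar_ok_deformable f : Pstar_ok f -> deformable f.
Proof.
case=> _ m _ nil.
have a0b0 : arr f 0 * barr f 0 = 0 by rewrite -mesh_sum0 //; apply: m; lia.
have a1b1 : arr f 1 * barr f 1 = 0 by rewrite -mesh_sum1 //; apply: m; lia.
by split=> //; rewrite -expr_add_sqr0 ?sqr0_swap // -sub2_double.
Qed.

Section Half.
Variable h : A.
Hypotheses (hC : forall z, h * z = z * h) (hh : h + h = 1).

Lemma P_ok_deform f : P_ok f -> Pstar_ok (deform f h).
Proof.
move=> Pf; have nf := P_ok_deformable Pf; have [q m] := Pf; have [_ a1b1 nil] := nf.
have xx := xf_sqr0 nf; have yy : yf f * yf f = 0 by apply: sqr0_swap.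
have hhC z : (h + h) * z = z * (h + h) by rewrite hh mul1r mulr1.
split.
- exact: quiver_ok_deform.
- by move=> v vn v2; rewrite mesh_deform // m.
- rewrite mesh_deform2 // m; last by lia.
  rewrite xf_deform yf_deform // half_pred (shift_mul_l _ _ xx hhC).
  by rewrite hh mul1r sub0r addNr.
- rewrite xf_deform yf_deform // sub2_double expr_add_sqr0 ?(shift_sqr0 xx nil hhC) //.
  by rewrite (shift_mul_l _ _ xx hhC) shift_mul_r.
Qed.

Lemma Pstar_ok_deform f : Pstar_ok f -> P_ok (deform f (- h)).
Proof.
move=> Pf; have nf := Pstar_ok_deformable Pf; have [q m rel2 _] := Pf.
split=> [|v vn]; first exact: (quiver_ok_deform (centralN hC)).
have [->|v2] := eqVneq v 2%N; last by rewrite (mesh_deform (centralN hC) nf) // m.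
by rewrite (mesh_deform2 (centralN hC) nf) -opprD mulNr opprK hh mul1r -half_pred.
Qed.

End Half.

End DQuiverRepresentation.

Theorem mainTheorem13 (K : closedFieldType) (n : nat)
  (Hn : (4 <= n)%N) (Heven : ~~ odd n) (Hchar : (2%:R : K) != 0) :
  pres_iso (P_rels K n) (Pstar_rels K n).
Proof.
pose h : K := 2%:R^-1.
have hh : h + h = 1 by rewrite /h; field.
have scalN1 (R : seq (term K (gen n))) : scal R (-1) = -1 by rewrite scalN scal1.
have scal_hh (R : seq (term K (gen n))) : scal R h + scal R h = 1.
  by rewrite -scalD hh scal1.
have ev_deform (R : seq (term K (gen n))) c :
    (fun g => ev (scal R) (cl_gen R) (deformT c g)) = deform (scal R) (cl_gen R) (scal R c).
  by apply: boolp.funext => g; apply/ev_deformT/scalN.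
have P_gen : P_ok (scal _) (cl_gen (P_rels K n)).
  by apply/(P_relsP (scalN1 _)) => r; apply: ev_rel.
have Pstar_gen : Pstar_ok (scal _) (cl_gen (Pstar_rels K n)).
  by apply/(Pstar_relsP (scalN1 _) Hn) => r; apply: ev_rel.
exists (deformT (- h)), (deformT h); split.
- move=> r Pr; apply/eqv_evP; rewrite ev_subst ev_deform scalN; move: r Pr.
  by apply/(P_relsP (scalN1 _))/(Pstar_ok_deform Hn Heven (scal_central h) (scal_hh _)).
- move=> r Pr; apply/eqv_evP; rewrite ev_subst ev_deform; move: r Pr.
  by apply/(Pstar_relsP (scalN1 _) Hn)/(P_ok_deform Hn Heven (scal_central h) (scal_hh _)).
- move=> g; apply/eqv_evP; rewrite ev_subst ev_deform ev_deformT ?scalN //.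
  exact: (deformK Hn (scal_central h) (P_ok_deformable Hn Heven P_gen)).
- move=> g; apply/eqv_evP; rewrite ev_subst ev_deform ev_deformT ?scalN //.
  exact: (deformNK Hn (scal_central h) (Pstar_ok_deformable Hn Heven Pstar_gen)).
Qed.
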